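(* Let $G^*$ and $G^*_u$ be as in the context. For any $S\subseteq[12]$ and $I=\{4,8,12\}\cap S$, we have $\mathsf{MAIS}(G^*_S)<\alpha(G^*_{S,u})$ if and only if either $S=\{2,10,7\}\cup I$ or $S=\{3,6,11\}\cup I$.
   Context: Consider the three-receiver unicast index coding problem with 12 messages indexed by $[12]$, where receiver $u_i$ demands the messages indexed by $W_i$ and knows those indexed by $K_i$: $W_1=\{1,2,3,4\}$, $W_2=\{5,6,7,8\}$, $W_3=\{9,10,11,12\}$, $K_1=\{5,6,9,10\}$, $K_2=\{1,2,9,11\}$, $K_3=\{1,3,5,7\}$. $G^*$ is the directed graph on vertex set $[12]$ with a directed edge $(a,b)$ iff $b\in K_i$, where $i$ is the unique index with $a\in W_i$. $G^*_u$ is the undirected graph on $[12]$ in which $\{a,b\}$ is an edge iff both $(a,b)$ and $(b,a)$ are edges of $G^*$. For $S\subseteq[12]$, $G^*_S$ and $G^*_{S,u}$ are the subgraphs of $G^*$ and $G^*_u$ induced by $S$. $\mathsf{MAIS}(D)$ is the maximum number of vertices of an acyclic induced subgraph of a directed graph $D$, and $\alpha(H)$ is the independence number of an undirected graph $H$. *)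

From mathcomp Require Import all_boot.
Set Implicit Arguments. Unset Strict Implicit. Unset Printing Implicit Defensive.

(* Messages [12] = {1,...,12}; the vertex v : 'I_12 represents message v+1. *)
Definition msg (v : 'I_12) : nat := (val v).+1.

(* Demand sets W_i and side-information sets K_i, i = 1,2,3 *)
Definition W (i : nat) : seq nat :=
  match i with 1 => [:: 1;2;3;4] | 2 => [:: 5;6;7;8] | 3 => [:: 9;10;11;12] | _ => [::] end.
Definition K (i : nat) : seq nat :=
  match i with 1 => [:: 5;6;9;10] | 2 => [:: 1;2;9;11] | 3 => [:: 1;3;5;7] | _ => [::] end.

Definition recv (a : nat) : nat :=
  if a \in W 1 then 1 else if a \in W 2 then 2 else 3.

Definition Gstar : rel 'I_12 := fun a b => msg b \in K (recv (msg a)).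

Definition Gu : rel 'I_12 := fun a b => Gstar a b && Gstar b a.

Definition induced (e : rel 'I_12) (T : {set 'I_12}) : rel 'I_12 :=
  fun a b => [&& a \in T, b \in T & e a b].

Definition acyclic_in (e : rel 'I_12) (T : {set 'I_12}) : bool :=
  [forall x, forall y, induced e T x y ==> ~~ connect (induced e T) y x].

Definition independent (e : rel 'I_12) (T : {set 'I_12}) : bool :=
  [forall x in T, forall y in T, ~~ e x y].

(* MAIS(G^*_S): max size of T ⊆ S with G^*_T acyclic (induced subgraphs of G^*_S
   are exactly the G^*_T for T ⊆ S) *)
Definition MAIS (S : {set 'I_12}) : nat :=
  \max_(T : {set 'I_12} | (T \subset S) && acyclic_in Gstar T) #|T|.

Definition alpha (S : {set 'I_12}) : nat :=
  \max_(T : {set 'I_12} | (T \subset S) && independent Gu T) #|T|.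

Definition msgs (l : seq nat) : {set 'I_12} := [set v | msg v \in l].

From mathcomp Require Import all_boot.

Set Implicit Arguments.
Unset Strict Implicit.
Unset Printing Implicit Defensive.

(* Every 2-cycle of G^* is an edge of G^*_u, so acyclic sets are independent;
   conversely an independent set is acyclic unless it contains one of the
   directed triangles 2 -> 10 -> 7 -> 2 or 3 -> 6 -> 11 -> 3.  Both families
   are closed under subsets, so MAIS S and alpha S are the maxima of #|A :&: S|
   over their explicitly listed maximal members A (the sources 4, 8, 12 lie in
   all of them).  The theorem then becomes a comparison over the 2^12 sets S,
   settled by evaluation on bit sequences. *)

Section InducedSubgraphs.

Variable e : rel 'I_12.
Implicit Types T : {set 'I_12}.

Lemma acyclic_inP T :
  reflect (forall x y, induced e T x y -> ~~ connect (induced e T) y x)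
          (acyclic_in e T).
Proof.
apply: (iffP forallP) => [acT x y | acT x]; last by apply/forallP => y; apply/implyP/acT.
exact/implyP/(forallP (acT x)).
Qed.

Lemma independentP T : reflect {in T &, forall x y, ~~ e x y} (independent e T).
Proof.
apply: (iffP forall_inP) => [indT x y Tx Ty | indT x Tx].
  exact: (forall_inP (indT x Tx)).
by apply/forall_inP => y; apply: indT.
Qed.

Lemma induced_subrel T T' : T \subset T' -> subrel (induced e T) (induced e T').
Proof.
by move=> sTT' x y /and3P [Tx Ty exy]; rewrite /induced !(subsetP sTT').
Qed.

Lemma acyclic_in_subset T T' : T \subset T' -> acyclic_in e T' -> acyclic_in e T.
Proof.
move=> sTT' /acyclic_inP acT'; apply/acyclic_inP => x y /(induced_subrel sTT') eT'xy.
apply: contra (acT' x y eT'xy); apply: connect_sub => u v /(induced_subrel sTT').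
exact: connect1.
Qed.

Lemma independent_subset T T' : T \subset T' -> independent e T' -> independent e T.
Proof.
move=> sTT' /independentP indT'; apply/independentP => x y Tx Ty.
by apply: indT'; apply: (subsetP sTT').
Qed.

Lemma acyclic_in_rank T (r : 'I_12 -> nat) :
  {in T &, forall x y, e x y -> r x < r y} -> acyclic_in e T.
Proof.
move=> r_incr; apply/acyclic_inP => x y /and3P [Tx Ty exy].
apply/negP => /connectP [p eTp x_last].
have: r y <= r (last y p).
  elim: p y {Ty exy x_last} eTp => //= z p IHp y /andP [/and3P [Ty Tz eyz] eTp].
  exact: leq_trans (ltnW (r_incr _ _ Ty Tz eyz)) (IHp z eTp).
by rewrite -x_last leqNgt r_incr.
Qed.

Lemma cycle_not_acyclic_in T x p :
  {subset x :: p <= T} -> cycle e (x :: p) -> ~~ acyclic_in e T.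
Proof.
move=> sxpT; rewrite /cycle => exp; apply/acyclic_inP.
have /= : path (induced e T) x (rcons p x).
  apply: (sub_in_path (P := mem T)) exp => [u v Tu Tv euv|]; first exact/and3P.
  rewrite -rcons_cons all_rcons; apply/andP.
  by split; [exact: sxpT (mem_head x p) | apply/allP].
case: p {sxpT exp} => [|y p] /andP [eTxy eTpath] /(_ x _ eTxy)/negP; apply.
  exact: connect0.
by apply/connectP; exists (rcons p x); rewrite ?last_rcons.
Qed.

End InducedSubgraphs.

Lemma acyclic_in_independent (e : rel 'I_12) (T : {set 'I_12}) :
  acyclic_in e T -> independent (fun x y => e x y && e y x) T.
Proof.
move=> acT; apply/independentP => x y Tx Ty; apply/andP => -[exy eyx].
apply/negP: acT; apply: (cycle_not_acyclic_in (x := x) (p := [:: y])).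
  by move=> u; rewrite !inE => /orP [] /eqP ->.
by rewrite /= exy eyx.
Qed.

Lemma bigmax_card_cover (V : finType) (I : eqType) (P : pred {set V})
    (L : seq I) (F : I -> {set V}) (S : {set V}) :
  (forall i (T : {set V}), i \in L -> T \subset F i -> P T) ->
  (forall T : {set V}, P T -> exists2 i, i \in L & T \subset F i) ->
  \max_(T : {set V} | (T \subset S) && P T) #|T| = \max_(i <- L) #|F i :&: S|.
Proof.
move=> sub_P P_cover; apply/eqP; rewrite eqn_leq; apply/andP; split.
  apply/bigmax_leqP => T /andP [sTS PT]; have [i Li sTFi] := P_cover T PT.
  apply: leq_trans (leq_bigmax_seq _ Li isT).
  by apply: subset_leq_card; rewrite subsetI sTFi.
apply/bigmax_leqP_seq => i Li _; apply: leq_bigmax_cond.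
by rewrite subsetIr (sub_P i) ?subsetIl.
Qed.

(* [Gstar x y] is convertible to [Gmsg (msg x) (msg y)]. *)
Definition Gmsg (a b : nat) : bool := b \in K (recv a).

Definition messages : seq nat := iota 1 12.

Lemma map_msg_enum : map msg (enum 'I_12) = messages.
Proof. by rewrite (_ : msg = succn \o val) // map_comp val_enum_ord. Qed.

Lemma all_messages (p : pred nat) : all p messages = [forall v, p (msg v)].
Proof.
rewrite -map_msg_enum all_map; apply/allP/forallP => [p_msg v | p_msg v _].
  by apply: p_msg; rewrite mem_enum.
exact: p_msg.
Qed.

Lemma count_messages (p : pred nat) : count p messages = #|[pred v | p (msg v)]|.
Proof. by rewrite -map_msg_enum count_map enumT cardE /enum_mem size_filter. Qed.

Definition represents (P : pred nat) (T : {set 'I_12}) := forall v, P (msg v) = (v \in T).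

Lemma represents_msgs l : represents (fun m => m \in l) (msgs l).
Proof. by move=> v; rewrite inE. Qed.

Definition bitpred (bs : bitseq) : pred nat := fun m => nth false bs m.-1.

Fixpoint bitseqs n : seq bitseq :=
  if n is n'.+1 then [seq b :: s | b <- [:: true; false], s <- bitseqs n']
  else [:: [::]].

Lemma mem_bitseqs s : s \in bitseqs (size s).
Proof. by elim: s => // b s IHs; apply/allpairsP; exists (b, s); case: b. Qed.

Lemma bitseqs_represent T : exists2 bs, bs \in bitseqs 12 & represents (bitpred bs) T.
Proof.
exists [seq v \in T | v <- enum 'I_12].
  by have := mem_bitseqs [seq v \in T | v <- enum 'I_12]; rewrite size_map size_enum_ord.
by move=> v; rewrite /bitpred /msg /= (nth_map v) ?size_enum_ord // nth_ord_enum.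
Qed.

Definition subset_msgsb (P : pred nat) (l : seq nat) : bool :=
  all (fun m => P m ==> (m \in l)) messages.

Definition card_msgsIb (P : pred nat) (l : seq nat) : nat :=
  count (fun m => (m \in l) && P m) messages.

(* A [foldr] rather than a (locked) bigop, so that it evaluates. *)
Definition max_card_msgsIb (P : pred nat) (L : seq (seq nat)) : nat :=
  foldr maxn 0 (map (card_msgsIb P) L).

Definition independentb (P : pred nat) : bool :=
  all (fun a => all (fun b => P a ==> P b ==> ~~ (Gmsg a b && Gmsg b a)) messages)
      messages.

Definition eq_msgsUIb (P : pred nat) (l Z : seq nat) : bool :=
  all (fun m => P m == (m \in l) || (m \in Z) && P m) messages.

Section Represented.

Variables (P : pred nat) (T : {set 'I_12}).
Hypothesis PT : represents P T.

Lemma subset_msgsE l : (T \subset msgs l) = subset_msgsb P l.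
Proof.
rewrite /subset_msgsb all_messages; apply/subsetP/forallP => [sTl v | Pl v].
  by rewrite PT; apply/implyP => /sTl; rewrite inE.
by rewrite -PT inE; apply/implyP.
Qed.

Lemma max_card_msgsIE L : \max_(l <- L) #|msgs l :&: T| = max_card_msgsIb P L.
Proof.
rewrite /max_card_msgsIb foldrE big_map; apply: eq_bigr => l _.
by rewrite /card_msgsIb count_messages; apply: eq_card => v; rewrite !inE PT.
Qed.

Lemma independentE : independent Gu T = independentb P.
Proof.
rewrite /independentb all_messages; apply: eq_forallb => x.
rewrite all_messages PT; case: (x \in T) => /=; last by apply/esym/forallP.
by apply: eq_forallb => y; rewrite PT.
Qed.

Lemma eq_msgsUIE l Z : (T == msgs l :|: (msgs Z :&: T)) = eq_msgsUIb P l Z.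
Proof.
rewrite /eq_msgsUIb all_messages; apply/eqP/forallP => [E v | E]; last apply/setP => v.
  by rewrite !PT {1}E !inE.
by have := E v; rewrite !PT !inE => /eqP.
Qed.

Lemma msgs_subset_all c : all P c -> msgs c \subset T.
Proof. by move=> /allP Pc; apply/subsetP => v; rewrite inE -PT => /Pc. Qed.

End Represented.

Definition edges_forward (l : seq nat) : bool :=
  all (fun a => all (fun b => Gmsg a b ==> (index a l < index b l)) l) l.

Lemma acyclic_msgs l : edges_forward l -> acyclic_in Gstar (msgs l).
Proof.
move=> /allP fwd; apply: (acyclic_in_rank (r := fun x => index (msg x) l)) => x y.
by rewrite !inE => lx ly; apply/implyP/(allP (fwd _ lx)).
Qed.

Lemma msgs_cycle_not_acyclic m c (T : {set 'I_12}) :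
  {subset m :: c <= messages} -> cycle Gmsg (m :: c) -> msgs (m :: c) \subset T ->
  ~~ acyclic_in Gstar T.
Proof.
move=> c_msg c_cycle /subsetP sCT; pose vtx k : 'I_12 := inord k.-1.
have msg_vtx k : k \in m :: c -> msg (vtx k) = k.
  move/c_msg; rewrite mem_iota => /andP [k_gt0 k_le12].
  by rewrite /msg /vtx /= inordK ?prednK // -ltnS prednK.
apply: (cycle_not_acyclic_in (x := vtx m) (p := map vtx c)).
  move=> v; rewrite -[vtx m :: _]/(map vtx (m :: c)) => /mapP [k ck ->].
  by apply: sCT; rewrite inE msg_vtx.
rewrite -[vtx m :: _]/(map vtx (m :: c)) -[cycle Gstar _]/(cycle (relpre msg Gmsg) _).
by rewrite -cycle_map -map_comp map_id_in.
Qed.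

(* Each set is listed in a topological order of G^*. *)
Definition maximal_acyclic : seq (seq nat) :=
  [:: [:: 4; 8; 12; 3; 7; 1; 2]; [:: 4; 8; 12; 3; 7; 5; 6];
      [:: 4; 8; 12; 6; 10; 5; 7]; [:: 4; 8; 12; 2; 11; 1; 3];
      [:: 4; 8; 12; 2; 11; 9; 10]; [:: 4; 8; 12; 6; 10; 9; 11]].

Definition maximal_independent : seq (seq nat) :=
  [:: [:: 1; 2; 3; 4; 7; 8; 12]; [:: 3; 4; 5; 6; 7; 8; 12]; [:: 2; 4; 7; 8; 10; 12];
      [:: 4; 5; 6; 7; 8; 10; 12]; [:: 1; 2; 3; 4; 8; 11; 12]; [:: 3; 4; 6; 8; 11; 12];
      [:: 2; 4; 8; 9; 10; 11; 12]; [:: 4; 6; 8; 9; 10; 11; 12]].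

Lemma maximal_acyclic_forward : all edges_forward maximal_acyclic.
Proof. by vm_compute. Qed.

Lemma maximal_independent_independent :
  all (fun l => independentb (fun m => m \in l)) maximal_independent.
Proof. by vm_compute. Qed.

Lemma acyclic_cover_bitseqs :
  all (fun bs => [==> independentb (bitpred bs), ~~ all (bitpred bs) [:: 2; 10; 7],
                      ~~ all (bitpred bs) [:: 3; 6; 11]
                      => has (subset_msgsb (bitpred bs)) maximal_acyclic])
      (bitseqs 12).
Proof. by vm_compute. Qed.

Lemma independent_cover_bitseqs :
  all (fun bs => independentb (bitpred bs) ==>
                 has (subset_msgsb (bitpred bs)) maximal_independent)
      (bitseqs 12).
Proof. by vm_compute. Qed.

Lemma MAIS_lt_alpha_bitseqs :
  all (fun bs => let P := bitpred bs in
         (max_card_msgsIb P maximal_acyclic < max_card_msgsIb P maximal_independent)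
         == eq_msgsUIb P [:: 2; 10; 7] [:: 4; 8; 12]
            || eq_msgsUIb P [:: 3; 6; 11] [:: 4; 8; 12])
      (bitseqs 12).
Proof. by vm_compute. Qed.

Lemma acyclic_cover T :
  acyclic_in Gstar T -> exists2 l, l \in maximal_acyclic & T \subset msgs l.
Proof.
move=> acT; have [bs bs12 PT] := bitseqs_represent T.
have indT : independentb (bitpred bs).
  by rewrite -(independentE PT); apply: acyclic_in_independent.
have no_triangle m c : {subset m :: c <= messages} -> cycle Gmsg (m :: c) ->
    ~~ all (bitpred bs) (m :: c).
  move=> c_msg c_cycle; apply: contraL acT => /(msgs_subset_all PT).
  exact: msgs_cycle_not_acyclic.
have no_2_10_7 : ~~ all (bitpred bs) [:: 2; 10; 7].
  by apply: no_triangle => //; apply/allP.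
have no_3_6_11 : ~~ all (bitpred bs) [:: 3; 6; 11].
  by apply: no_triangle => //; apply/allP.
have := allP acyclic_cover_bitseqs bs bs12.
rewrite indT (negbTE no_2_10_7) (negbTE no_3_6_11) => /hasP [l MAl].
by rewrite -(subset_msgsE PT); exists l.
Qed.

Lemma independent_cover T :
  independent Gu T -> exists2 l, l \in maximal_independent & T \subset msgs l.
Proof.
have [bs bs12 PT] := bitseqs_represent T.
rewrite (independentE PT) => indT.
have /hasP [l MIl] := implyP (allP independent_cover_bitseqs bs bs12) indT.
by rewrite -(subset_msgsE PT); exists l.
Qed.

Lemma MAIS_max S : MAIS S = \max_(l <- maximal_acyclic) #|msgs l :&: S|.
Proof.
apply: bigmax_card_cover => [l T MAl sTl | T]; last exact: acyclic_cover.
exact: acyclic_in_subset sTl (acyclic_msgs (allP maximal_acyclic_forward l MAl)).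
Qed.

Lemma alpha_max S : alpha S = \max_(l <- maximal_independent) #|msgs l :&: S|.
Proof.
apply: bigmax_card_cover => [l T MIl sTl | T]; last exact: independent_cover.
apply: independent_subset sTl _.
by rewrite (independentE (represents_msgs l)) (allP maximal_independent_independent).
Qed.

Theorem theorem4 (S : {set 'I_12}) :
  let I := msgs [:: 4; 8; 12] :&: S in
  (MAIS S < alpha S) <->
  (S = msgs [:: 2; 10; 7] :|: I \/ S = msgs [:: 3; 6; 11] :|: I).
Proof.
move=> I; rewrite {}/I; have [bs bs12 PS] := bitseqs_represent S.
have := allP MAIS_lt_alpha_bitseqs bs bs12.
rewrite /= -!(eq_msgsUIE PS) -!(max_card_msgsIE PS) -MAIS_max -alpha_max => /eqP ->.
by split=> [/orP [] /eqP | [] /eqP E]; [left | right | rewrite E | rewrite E orbT].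
Qed.
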